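(* For every base $b\ge 2$ there exist infinitely many $b$-wARH numbers, and infinitely many distinct integers $A\ge 0$ that occur as additive extra terms of some $b$-wARH number.
   Context: Fix a base $b\ge 2$. $s_b(N)$ is the sum of the base-$b$ digits of $N$. For a positive integer $X$, its reversal $X^R$ is the integer whose base-$b$ representation is that of $X$ written in reverse order (leading zeros of the result are dropped). A positive integer $N$ is a $b$-wARH number if there exists an integer $A\ge 0$, called an additive extra term of $N$, such that $N=(A+s_b(N))+(A+s_b(N))^R$. *)

From mathcomp Require Import all_boot.
Set Implicit Arguments. Unset Strict Implicit. Unset Printing Implicit Defensive.

(* base-b digits of n, least significant first (fuel = n suffices for b >= 2) *)
Fixpoint digits_aux (b fuel n : nat) : seq nat :=
  match fuel with
  | 0 => [::]
  | fuel'.+1 => if n == 0 then [::] else (n %% b) :: digits_aux b fuel' (n %/ b)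
  end.
Definition digits (b n : nat) : seq nat := digits_aux b n n.

Definition from_digits (b : nat) (s : seq nat) : nat :=
  foldr (fun d acc => d + b * acc) 0 s.

Definition digit_sum (b n : nat) : nat := sumn (digits b n).

(* X^R : digits written in reverse order (leading zeros of result vanish) *)
Definition rev_num (b n : nat) : nat := from_digits b (rev (digits b n)).

Definition additive_extra_term (b N A : nat) : Prop :=
  N = (A + digit_sum b N) + rev_num b (A + digit_sum b N).

Definition wARH (b N : nat) : Prop :=
  0 < N /\ exists A, additive_extra_term b N A.

From mathcomp Require Import all_boot.
From mathcomp Require Import zify.

(* For every k >= 1 the pair
       N = b^k + 1,   A = b^k - 2
   is a b-wARH number together with an additive extra term.  Indeed the
   base-b expansion of b^k + 1 is 1 0...0 1, so s_b(N) = 2 and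
   A + s_b(N) = b^k, whose digit string 1 0...0 reverses to 1; hence
   (A + s_b(N)) + (A + s_b(N))^R = b^k + 1 = N.  Letting k grow makes both
   N and A exceed any given bound. *)

Section BaseDigits.

Variable b : nat.
Hypothesis hb : 2 <= b.

Lemma digits_aux_fuel f1 f2 n : n <= f1 -> n <= f2 ->
  digits_aux b f1 n = digits_aux b f2 n.
Proof.
elim: f1 f2 n => [|f1 IH] [|f2] [|n] h1 h2 //=; congr (_ :: _).
have lt_div : n.+1 %/ b < n.+1 by rewrite ltn_Pdiv.
by apply: IH; lia.
Qed.

Lemma digitsE n :
  digits b n = if n == 0 then [::] else n %% b :: digits b (n %/ b).
Proof.
rewrite /digits; case: n => [|n] //=; congr (_ :: _).
have lt_div : n.+1 %/ b < n.+1 by rewrite ltn_Pdiv.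
by apply: digits_aux_fuel; lia.
Qed.

Lemma digits_cons n d : d < b -> 0 < b * n + d ->
  digits b (b * n + d) = d :: digits b n.
Proof.
move=> ltdb pos; rewrite digitsE gtn_eqF // mulnC modnMDl modn_small //.
by rewrite divnMDl ?divn_small ?addn0 //; lia.
Qed.

Lemma digits_expn k : digits b (b ^ k) = nseq k 0 ++ [:: 1].
Proof.
elim: k => [|k IH].
  by rewrite expn0 digitsE modn_small // divn_small // digitsE.
have pos : 0 < b * b ^ k by rewrite muln_gt0 expn_gt0; lia.
by rewrite expnS -[b * _]addn0 digits_cons ?IH ?addn0 //; lia.
Qed.

Lemma digits_expnS_add1 k :
  digits b (b ^ k.+1 + 1) = 1 :: nseq k 0 ++ [:: 1].
Proof. by rewrite expnS digits_cons ?digits_expn //; lia. Qed.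

Lemma digit_sum_expnS_add1 k : digit_sum b (b ^ k.+1 + 1) = 2.
Proof. by rewrite /digit_sum digits_expnS_add1 /= sumn_cat sumn_nseq. Qed.

Lemma rev_num_expn k : rev_num b (b ^ k) = 1.
Proof.
rewrite /rev_num digits_expn rev_cat rev_nseq /=.
suff -> : from_digits b (nseq k 0) = 0 by rewrite muln0.
by elim: k => //= k ->; rewrite muln0.
Qed.

Lemma power_extra_term k :
  additive_extra_term b (b ^ k.+1 + 1) (b ^ k.+1 - 2).
Proof.
have big : k.+1 < b ^ k.+1 by rewrite ltn_expl.
rewrite /additive_extra_term digit_sum_expnS_add1 subnK; last by lia.
by rewrite rev_num_expn.
Qed.

End BaseDigits.

Theorem proposition11 (b : nat) (hb : 2 <= b) :
  (forall M : nat, exists N : nat, M < N /\ wARH b N) /\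
  (forall M : nat, exists A N : nat, M < A /\ 0 < N /\ additive_extra_term b N A).
Proof.
split=> M; have big : M.+3 < b ^ M.+3 by rewrite ltn_expl.
- exists (b ^ M.+3 + 1); split; first by lia.
  split; first by lia.
  by exists (b ^ M.+3 - 2); apply: power_extra_term.
- exists (b ^ M.+3 - 2), (b ^ M.+3 + 1).
  by do 2 (split; first by lia); apply: power_extra_term.
Qed.
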